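(* Let $m\in\mathbb{N}$ and let $H_m$ be the graph described in the context, with the geodesic-biased random walk with target $b$ and excited set $\mathcal{X}=\{a,s_1,\dots,s_m\}$. Writing $T(v_1,b)$ for the expected first hitting time of $b$ by this walk started at $v_1$, we have \[T(v_1,b)\ \ge\ \frac{\exp(\sqrt{m}/10)}{m^{3/2}+1}.\]
   Context: Geodesic-biased random walk: let $G$ be a finite connected graph, $b\in V(G)$ a target vertex and $\mathcal{X}\subseteq V(G)$ a set of excited vertices. For every vertex $x\neq b$ fix in advance one shortest path in $G$ from $x$ to $b$. From an unexcited vertex the walker moves to a uniformly random neighbour; from an excited vertex she moves to the next vertex on the fixed shortest path to $b$. The graph $H_m$ ($m\in\mathbb{N}$) has vertex set $\{a,b\}\cup\{v_1,\dots,v_m\}\cup\{s_1,\dots,s_m\}\cup\{r_{i,j}: i\in[m],\ j\in[2m+1]\}$ (so $2+m(2m+3)$ vertices) and edges: the path $a,v_1,v_2,\dots,v_m,b$; the path $a,s_1,s_2,\dots,s_m$; and for each $i\in[m]$ the path $s_i,r_{i,1},r_{i,2},\dots,r_{i,2m+1},v_i$ (of length $2m+2$). Its maximum degree is $3$. In $H_m$ the unique shortest path from $s_i$ to $b$ goes $s_i,s_{i-1},\dots,s_1,a,v_1,\dots,v_m,b$, so with these excitations the walker moves deterministically from $s_i$ to $s_{i-1}$ (from $s_1$ to $a$) and from $a$ to $v_1$. *)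

From Stdlib Require Import Reals Lra Lia Arith List Bool.
Import ListNotations.
Open Scope R_scope.

(* Vertices of H_m: a, b, v_i, s_i, r_{i,j} (indices are 1-based, validity
   w.r.t. m is given by membership in [verts m]). *)
Inductive vtx : Type :=
| Va | Vb | Vv (i : nat) | Vs (i : nat) | Vr (i j : nat).

Definition veqb (x y : vtx) : bool :=
  match x, y with
  | Va, Va => true
  | Vb, Vb => true
  | Vv i, Vv i' => Nat.eqb i i'
  | Vs i, Vs i' => Nat.eqb i i'
  | Vr i j, Vr i' j' => Nat.eqb i i' && Nat.eqb j j'
  | _, _ => false
  end.

Fixpoint path_edges (p : list vtx) : list (vtx * vtx) :=
  match p with
  | x :: ((y :: _) as q) => (x, y) :: path_edges q
  | _ => []
  end.

Definition pathV (m : nat) : list vtx := Va :: map Vv (seq 1 m) ++ [Vb].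
Definition pathS (m : nat) : list vtx := Va :: map Vs (seq 1 m).
Definition pathR (m i : nat) : list vtx :=
  Vs i :: map (Vr i) (seq 1 (2 * m + 1)) ++ [Vv i].

Definition edges (m : nat) : list (vtx * vtx) :=
  path_edges (pathV m) ++ path_edges (pathS m)
  ++ flat_map (fun i => path_edges (pathR m i)) (seq 1 m).

Definition verts (m : nat) : list vtx :=
  Va :: Vb :: map Vv (seq 1 m) ++ map Vs (seq 1 m)
  ++ flat_map (fun i => map (Vr i) (seq 1 (2 * m + 1))) (seq 1 m).

Definition adjb (m : nat) (x y : vtx) : bool :=
  existsb (fun e => (veqb (fst e) x && veqb (snd e) y)
                    || (veqb (fst e) y && veqb (snd e) x)) (edges m).

Definition nbrs (m : nat) (x : vtx) : list vtx := filter (adjb m x) (verts m).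

Inductive walk (m : nat) : vtx -> vtx -> nat -> Prop :=
| walk0 x : walk m x x 0
| walkS x y z k : adjb m x y = true -> walk m y z k -> walk m x z (S k).

(* y is the vertex following x on some shortest path from x to b:
   y is a neighbour of x and dist(y,b) < dist(x,b). *)
Definition geodesic_step (m : nat) (x y : vtx) : Prop :=
  adjb m x y = true /\
  forall k, walk m x Vb k -> exists k', walk m y Vb k' /\ (k' < k)%nat.

Definition excited (x : vtx) : bool :=
  match x with Va | Vs _ => true | _ => false end.

(* transition probability of the geodesic-biased walk; [nxt x] is the
   next vertex on the fixed shortest path from x to b *)
Definition trans (m : nat) (nxt : vtx -> vtx) (x y : vtx) : R :=
  if excited x then (if veqb (nxt x) y then 1 else 0)
  else (if adjb m x y then / INR (length (nbrs m x)) else 0).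

Definition sumR (l : list R) : R := fold_right Rplus 0 l.

(* killed[n] y = P_{v_1}(X_n = y and b not visited at times 0..n-1) *)
Fixpoint killed (m : nat) (nxt : vtx -> vtx) (n : nat) (y : vtx) : R :=
  match n with
  | O => if veqb y (Vv 1) then 1 else 0
  | S n' => sumR (map (fun x => killed m nxt n' x * trans m nxt x y)
                      (filter (fun x => negb (veqb x Vb)) (verts m)))
  end.

Definition hit_prob (m : nat) (nxt : vtx -> vtx) (n : nat) : R :=
  killed m nxt n Vb.

Definition hit_partial (m : nat) (nxt : vtx -> vtx) (N : nat) : R :=
  sum_f_R0 (fun n => INR n * hit_prob m nxt n) N.

(* E[T_b] >= c, with E[T_b] in [0, +oo] the supremum of the partial sums *)
Definition hitting_time_ge (m : nat) (nxt : vtx -> vtx) (c : R) : Prop :=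
  forall c', c' < c -> exists N, c' < hit_partial m nxt N.

(* Each visit to [v_i] has a chance [1/(3 (2m + 2))] of sending the walk through
   the whole detour to [s_i], after which the excited vertices carry it back to
   [v_1].  Along [v_1, ..., v_m] the walk is thus a symmetric walk reset at rate
   of order [1/m], which crosses a segment of length [m] only with probability
   [exp (- c sqrt m)].  Quantitatively, with [r = 1 + 1/(2 sqrt (m + 1))], the
   profile [phi (v_i) = r^i + r^-i - 2], interpolated linearly along the detours
   and zero on [a] and the [s_i], is almost harmonic, so
   [h = (phi b - phi) / phi (v_1)] decreases by at most one per step in
   expectation and [E T (v_1, b) >= h (v_1)], which is of order
   [exp (sqrt m / 4)].  A second potential, decreasing by at least one per step,
   makes the survival probability decay geometrically, so that the partial sums
   of the expectation really exceed the bound. *)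

From Stdlib Require Import Reals Lra Lia List Bool Permutation.
Import ListNotations.
Open Scope R_scope.

(** * Lists and finite sums *)

Section Sums.
Context {A : Type}.

Lemma sumR_ext (f g : A -> R) l :
  (forall x, In x l -> f x = g x) -> sumR (map f l) = sumR (map g l).
Proof. intro H. f_equal. apply map_ext_in. exact H. Qed.

Lemma sumR_app (f : A -> R) l1 l2 :
  sumR (map f (l1 ++ l2)) = sumR (map f l1) + sumR (map f l2).
Proof. induction l1 as [|x l IH]; simpl; [ring|rewrite IH; ring]. Qed.

Lemma sumR_plus (f g : A -> R) l :
  sumR (map (fun x => f x + g x) l) = sumR (map f l) + sumR (map g l).
Proof. induction l as [|x l IH]; simpl; [ring|rewrite IH; ring]. Qed.

Lemma sumR_scal_l (f : A -> R) c l :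
  sumR (map (fun x => c * f x) l) = c * sumR (map f l).
Proof. induction l as [|x l IH]; simpl; [ring|rewrite IH; ring]. Qed.

Lemma sumR_le (f g : A -> R) l :
  (forall x, In x l -> f x <= g x) -> sumR (map f l) <= sumR (map g l).
Proof.
  induction l as [|x l IH]; simpl; intro H; [lra|].
  apply Rplus_le_compat; auto.
Qed.

Lemma sumR_ge0 (f : A -> R) l :
  (forall x, In x l -> 0 <= f x) -> 0 <= sumR (map f l).
Proof.
  induction l as [|x l IH]; simpl; intro H; [lra|].
  assert (0 <= f x) by auto. assert (0 <= sumR (map f l)) by auto. lra.
Qed.

Lemma sumR_perm (f : A -> R) l l' :
  Permutation l l' -> sumR (map f l) = sumR (map f l').
Proof. induction 1; simpl; try ring; try (rewrite IHPermutation; ring); congruence. Qed.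

Lemma sumR_select (P : A -> bool) (f : A -> R) l s :
  NoDup l -> NoDup s -> (forall y, In y l /\ P y = true <-> In y s) ->
  sumR (map (fun y => if P y then f y else 0) l) = sumR (map f s) /\
  length (filter P l) = length s.
Proof.
  intros Hl Hs Hiff.
  assert (Hperm : Permutation (filter P l) s).
  { apply NoDup_Permutation; [apply NoDup_filter; exact Hl|exact Hs|].
    intro y. rewrite filter_In. apply Hiff. }
  split; [|exact (Permutation_length Hperm)].
  rewrite <- (sumR_perm f _ _ Hperm). clear Hl Hiff Hperm.
  induction l as [|x l IH]; simpl; [reflexivity|].
  destruct (P x); simpl; rewrite IH; ring.
Qed.

End Sums.

Lemma sumR_swap {A B : Type} (F : A -> B -> R) l1 l2 :
  sumR (map (fun y => sumR (map (fun x => F x y) l1)) l2) =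
  sumR (map (fun x => sumR (map (fun y => F x y) l2)) l1).
Proof.
  induction l1 as [|x l1 IH]; simpl.
  - induction l2 as [|y l2 IH2]; simpl; [ring|rewrite IH2; ring].
  - rewrite sumR_plus, IH. reflexivity.
Qed.

Lemma NoDup_flat_map {A B : Type} (f : A -> list B) l :
  NoDup l -> (forall x, NoDup (f x)) ->
  (forall x y z, In x l -> In y l -> In z (f x) -> In z (f y) -> x = y) ->
  NoDup (flat_map f l).
Proof.
  induction l as [|a l IH]; simpl; intros Hl Hf Hd; [constructor|].
  inversion_clear Hl as [|? ? Ha Hl'].
  apply NoDup_app; [apply Hf|apply IH; auto; intros; eapply Hd; eauto|].
  intros z Hz Hz'. apply in_flat_map in Hz' as [y [Hy Hzy]].
  assert (a = y) by (eapply Hd; eauto). subst. contradiction.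
Qed.

(** * Lyapunov bounds for the hitting time of a killed chain *)

Lemma Rinv_ge1_bounds x : 1 <= x -> 0 < / x <= 1.
Proof.
  intro Hx. split; [apply Rinv_0_lt_compat; lra|].
  rewrite <- Rinv_1. apply Rinv_le_contravar; lra.
Qed.

Lemma nat_mul_pow_le s N : 0 < s < 1 -> INR N * s ^ N <= s / (1 - s).
Proof.
  intro Hs.
  assert (Hth : 0 < / s - 1).
  { assert (1 < / s) by (rewrite <- Rinv_1; apply Rinv_lt_contravar; lra). lra. }
  pose proof (poly N _ Hth) as Hbern.
  replace (1 + (/ s - 1)) with (/ s) in Hbern by ring. rewrite pow_inv in Hbern.
  assert (Hpos : 0 < s ^ N) by (apply pow_lt; lra).
  apply Rmult_le_reg_l with (/ s - 1); [exact Hth|].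
  replace ((/ s - 1) * (s / (1 - s))) with 1 by (field; lra).
  apply Rmult_le_compat_l with (r := s ^ N) in Hbern; [|lra].
  rewrite Rinv_r in Hbern by lra. nra.
Qed.

Lemma linear_mul_pow_small a c rho eps :
  0 <= a -> 0 <= c -> 0 <= rho < 1 -> 0 < eps ->
  exists N, (a + c * INR N) * rho ^ N < eps.
Proof.
  intros Ha Hc Hrho Heps.
  set (s := (1 + rho) / 2).
  assert (Hs : 0 < s < 1) by (unfold s; lra).
  set (C := a + c * (s / (1 - s)) + 1).
  assert (HC : 0 < C).
  { assert (0 <= c * (s / (1 - s))).
    { apply Rmult_le_pos; [lra|]. apply Rlt_le, Rdiv_lt_0_compat; lra. }
    unfold C. lra. }
  destruct (pow_lt_1_zero s ltac:(rewrite Rabs_right; lra) (eps / C)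
              ltac:(apply Rdiv_lt_0_compat; lra)) as [N HN].
  exists N. specialize (HN N (Nat.le_refl N)).
  rewrite Rabs_right in HN by (apply Rle_ge, pow_le; lra).
  assert (Hsn : 0 < s ^ N) by (apply pow_lt; lra).
  assert (Hrs : rho ^ N <= s ^ N * s ^ N).
  { rewrite <- Rpow_mult_distr. apply pow_incr. unfold s. nra. }
  assert (Hs1 : s ^ N <= 1) by (rewrite <- (pow1 N); apply pow_incr; lra).
  pose proof (nat_mul_pow_le s N Hs) as Hlin. pose proof (pos_INR N).
  assert (Hbound : (a + c * INR N) * rho ^ N <= C * s ^ N).
  { apply Rle_trans with ((a + c * INR N) * (s ^ N * s ^ N)).
    - apply Rmult_le_compat_l; nra.
    - assert (a * (s ^ N * s ^ N) <= a * s ^ N) by (apply Rmult_le_compat_l; nra).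
      assert (c * (INR N * s ^ N) * s ^ N <= c * (s / (1 - s)) * s ^ N)
        by (apply Rmult_le_compat_r; [lra|apply Rmult_le_compat_l; lra]).
      unfold C. nra. }
  apply Rmult_lt_compat_l with (r := C) in HN; [|exact HC].
  replace (C * (eps / C)) with eps in HN by (field; lra). lra.
Qed.

Section KilledChain.

Variables (A : Type) (eqb : A -> A -> bool).
Hypothesis eqbP : forall x y, eqb x y = true <-> x = y.
Variables (V : list A) (b x0 : A) (p : A -> A -> R).

Definition live : list A := filter (fun x => negb (eqb x b)) V.

Fixpoint killed_dist (n : nat) (y : A) : R :=
  match n with
  | O => if eqb y x0 then 1 else 0
  | S n' => sumR (map (fun x => killed_dist n' x * p x y) live)
  end.

Definition step (f : A -> R) (x : A) : R := sumR (map (fun y => p x y * f y) V).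

Lemma step_ext f g x : (forall y, In y V -> f y = g y) -> step f x = step g x.
Proof. intro H. apply sumR_ext. intros y Hy. rewrite H; auto. Qed.

Lemma step_affine f a c x :
  step (fun y => a * f y + c) x = a * step f x + c * step (fun _ => 1) x.
Proof.
  unfold step. rewrite <- !sumR_scal_l, <- sumR_plus. apply sumR_ext. intros. ring.
Qed.

Definition survival (n : nat) : R := sumR (map (killed_dist n) live).

Definition weighted (f : A -> R) (n : nat) : R :=
  sumR (map (fun y => killed_dist n y * f y) live).

Definition mean_hit_partial (N : nat) : R :=
  sum_f_R0 (fun n => INR n * killed_dist n b) N.

Lemma in_live x : In x live <-> In x V /\ x <> b.
Proof.
  unfold live. rewrite filter_In, negb_true_iff.
  split; intros [Hx Hb]; split; auto.
  - intros ->. rewrite (proj2 (eqbP b b) eq_refl) in Hb. discriminate.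
  - destruct (eqb x b) eqn:E; [|reflexivity]. apply eqbP in E. contradiction.
Qed.

Hypotheses (V_nodup : NoDup V) (b_in : In b V).

Lemma sumR_live (F : A -> R) : sumR (map F V) = F b + sumR (map F live).
Proof.
  destruct (in_split b V b_in) as [l1 [l2 HV]].
  assert (Hl : live = l1 ++ l2).
  { unfold live. rewrite HV, filter_app. simpl.
    rewrite (proj2 (eqbP b b) eq_refl). simpl.
    rewrite HV in V_nodup. pose proof (NoDup_remove_2 _ _ _ V_nodup) as Hb.
    rewrite !forallb_filter_id; [reflexivity| |];
      apply forallb_forall; intros x Hx; apply negb_true_iff;
      destruct (eqb x b) eqn:E; auto; apply eqbP in E; subst;
      exfalso; apply Hb, in_or_app; auto. }
  rewrite Hl, HV, !sumR_app. simpl. ring.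
Qed.

Hypothesis p_ge0 : forall x y, 0 <= p x y.

Lemma killed_dist_ge0 n y : 0 <= killed_dist n y.
Proof.
  revert y. induction n as [|n IH]; intro y; simpl.
  - destruct (eqb y x0); lra.
  - apply sumR_ge0. intros x _. apply Rmult_le_pos; auto.
Qed.

Lemma weighted_le f g n :
  (forall x, In x live -> f x <= g x) -> weighted f n <= weighted g n.
Proof.
  intro H. apply sumR_le. intros x Hx.
  apply Rmult_le_compat_l; [apply killed_dist_ge0|auto].
Qed.

Lemma weighted_const c n : weighted (fun _ => c) n = c * survival n.
Proof.
  unfold weighted, survival. rewrite <- sumR_scal_l. apply sumR_ext. intros. ring.
Qed.

Lemma weighted_sub1 f n : weighted (fun x => f x - 1) n = weighted f n - survival n.
Proof.
  unfold weighted, survival.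
  rewrite (sumR_ext _ (fun y => killed_dist n y * f y + -1 * killed_dist n y))
    by (intros; ring).
  rewrite sumR_plus, sumR_scal_l. ring.
Qed.

Hypotheses (x0_in : In x0 V) (x0_nb : x0 <> b).

Lemma weighted_0 f : weighted f 0 = f x0.
Proof.
  assert (Hsel : forall y, In y live /\ eqb y x0 = true <-> In y [x0]).
  { intro y. rewrite in_live, eqbP. simpl.
    split; [intros [_ ->]; auto|intros [<-|[]]; auto]. }
  unfold weighted. cbn [killed_dist].
  rewrite (sumR_ext _ (fun y => if eqb y x0 then f y else 0))
    by (intros y _; destruct (eqb y x0); ring).
  rewrite (proj1 (sumR_select _ f live [x0] (NoDup_filter _ V_nodup)
                    (NoDup_cons _ (@in_nil _ _) (NoDup_nil _)) Hsel)).
  simpl. ring.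
Qed.

Lemma killed_dist_succ_sum f n :
  sumR (map (fun y => killed_dist (S n) y * f y) V) = weighted (step f) n.
Proof.
  unfold weighted, step.
  rewrite (sumR_ext _ (fun y => sumR (map (fun x => killed_dist n x * p x y * f y) live))).
  - rewrite sumR_swap. apply sumR_ext. intros x _.
    rewrite <- sumR_scal_l. apply sumR_ext. intros. ring.
  - intros y _. simpl.
    rewrite Rmult_comm, <- sumR_scal_l. apply sumR_ext. intros. ring.
Qed.

Lemma weighted_succ f n : f b = 0 -> weighted f (S n) = weighted (step f) n.
Proof.
  intro Hb. rewrite <- killed_dist_succ_sum, sumR_live, Hb. unfold weighted. ring.
Qed.

Hypothesis step_one : forall x, In x live -> step (fun _ => 1) x = 1.

Lemma survival_succ n : killed_dist (S n) b + survival (S n) = survival n.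
Proof.
  transitivity (weighted (step (fun _ => 1)) n).
  - rewrite <- killed_dist_succ_sum, sumR_live. unfold survival.
    rewrite Rmult_1_r. f_equal. apply sumR_ext. intros. ring.
  - unfold weighted, survival. apply sumR_ext. intros x Hx. rewrite step_one; auto. ring.
Qed.

Lemma mean_hit_partial_ge h K N :
  h b = 0 -> (forall x, In x live -> h x - 1 <= step h x) ->
  (forall x, In x live -> h x <= K) ->
  h x0 - (K + INR N) * survival N <= mean_hit_partial N.
Proof.
  intros Hb Hh HK.
  (* optional stopping at time [N]: [E min(T_b, N) + E (h X_N; T_b > N) >= h x0] *)
  assert (Hinv : h x0 <= mean_hit_partial N + INR N * survival N + weighted h N).
  { induction N as [|N IH].
    - rewrite weighted_0. unfold mean_hit_partial. simpl. rewrite !Rmult_0_l. lra.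
    - assert (Hw : weighted h N - survival N <= weighted h (S N)).
      { rewrite weighted_succ, <- weighted_sub1 by exact Hb. apply weighted_le. exact Hh. }
      assert (Hmass : (INR N + 1) * (killed_dist (S N) b + survival (S N))
                      = (INR N + 1) * survival N) by (rewrite survival_succ; ring).
      unfold mean_hit_partial in *. rewrite tech5, S_INR. lra. }
  assert (weighted h N <= K * survival N)
    by (rewrite <- weighted_const; apply weighted_le, HK).
  lra.
Qed.

Lemma step_lyapunov_ge1 G x :
  (forall y, In y V -> 0 <= G y) -> step G x <= G x - 1 -> 1 <= G x.
Proof.
  intros HG Hx. enough (0 <= step G x) by lra.
  apply sumR_ge0. intros y Hy. apply Rmult_le_pos; [apply p_ge0|apply HG, Hy].
Qed.

Lemma lyapunov_bound_ge1 G Gm :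
  (forall x, In x V -> 0 <= G x <= Gm) ->
  (forall x, In x live -> step G x <= G x - 1) -> 1 <= Gm.
Proof.
  intros HG HstepG. assert (Hx0 : In x0 live) by (apply in_live; auto).
  pose proof (step_lyapunov_ge1 G x0 (fun y Hy => proj1 (HG y Hy)) (HstepG x0 Hx0)).
  pose proof (HG x0 x0_in). lra.
Qed.

Lemma survival_le_geometric G Gm N :
  G b = 0 -> (forall x, In x V -> 0 <= G x <= Gm) ->
  (forall x, In x live -> step G x <= G x - 1) ->
  survival N <= Gm * (1 - / Gm) ^ N.
Proof.
  intros Hb HG HstepG.
  assert (HG1 : forall x, In x live -> 1 <= G x).
  { intros x Hx. apply step_lyapunov_ge1; [intros y Hy; apply HG, Hy|apply HstepG, Hx]. }
  pose proof (lyapunov_bound_ge1 G Gm HG HstepG) as HGm.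
  assert (Hsurv : forall n, survival n <= weighted G n <= Gm * survival n).
  { intro n. split.
    - rewrite <- (Rmult_1_l (survival n)), <- weighted_const.
      apply weighted_le. exact HG1.
    - rewrite <- weighted_const. apply weighted_le. intros x Hx. apply HG, in_live, Hx. }
  enough (weighted G N <= Gm * (1 - / Gm) ^ N) by (pose proof (Hsurv N); lra).
  induction N as [|N IH].
  - rewrite weighted_0. simpl. rewrite Rmult_1_r. apply HG, x0_in.
  - assert (Hdecay : weighted G (S N) <= (1 - / Gm) * weighted G N).
    { rewrite weighted_succ by exact Hb.
      apply Rle_trans with (weighted G N - survival N).
      - rewrite <- weighted_sub1. apply weighted_le. exact HstepG.
      - pose proof (Hsurv N).
        assert (weighted G N / Gm <= survival N).
        { apply Rmult_le_reg_l with Gm; [lra|]. field_simplify; lra. }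
        unfold Rdiv in *. lra. }
    pose proof (Rinv_ge1_bounds Gm HGm). simpl. nra.
Qed.

(* Lyapunov criterion: [h] loses at most one unit per step in expectation, so
   the expected hitting time of [b] is at least [h x0]; the second function [G]
   loses at least one unit per step, which makes the survival probability decay
   geometrically and lets the finite partial sums capture the bound. *)
Theorem mean_hit_partial_lyapunov h K G Gm :
  h b = 0 -> (forall x, In x live -> h x - 1 <= step h x) ->
  (forall x, In x live -> h x <= K) ->
  G b = 0 -> (forall x, In x V -> 0 <= G x <= Gm) ->
  (forall x, In x live -> step G x <= G x - 1) ->
  forall c, c < h x0 -> exists N, c < mean_hit_partial N.
Proof.
  intros Hb Hh HK HGb HG HstepG c Hc.
  pose proof (lyapunov_bound_ge1 G Gm HG HstepG) as HGm.
  set (K' := Rmax K 0). set (rho := 1 - / Gm).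
  assert (Hrho : 0 <= rho < 1).
  { pose proof (Rinv_ge1_bounds Gm HGm). unfold rho. lra. }
  assert (HK' : 0 <= K') by apply Rmax_r.
  destruct (linear_mul_pow_small (K' * Gm) Gm rho (h x0 - c)
              ltac:(nra) ltac:(lra) Hrho ltac:(lra)) as [N HN].
  exists N.
  pose proof (mean_hit_partial_ge h K' N Hb Hh
                (fun x Hx => Rle_trans _ _ _ (HK x Hx) (Rmax_l K 0))) as Hpartial.
  pose proof (survival_le_geometric G Gm N HGb HG HstepG) as Hsurv. fold rho in Hsurv.
  pose proof (pos_INR N).
  assert (Htail : (K' + INR N) * survival N <= (K' * Gm + Gm * INR N) * rho ^ N).
  { replace ((K' * Gm + Gm * INR N) * rho ^ N) with ((K' + INR N) * (Gm * rho ^ N)) by ring.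
    apply Rmult_le_compat_l; lra. }
  lra.
Qed.

End KilledChain.

Arguments killed_dist {A}.
Arguments live {A}.
Arguments step {A}.
Arguments mean_hit_partial {A}.

(** * The graph [H_m] *)

Lemma veqb_eq x y : veqb x y = true <-> x = y.
Proof.
  split.
  - destruct x, y; simpl; intro H; try discriminate;
      repeat match goal with
      | H : (_ && _)%bool = true |- _ => apply andb_true_iff in H as [? ?]
      | H : Nat.eqb _ _ = true |- _ => apply Nat.eqb_eq in H
      end; subst; reflexivity.
  - intros ->. destruct y; simpl; rewrite ?Nat.eqb_refl; reflexivity.
Qed.

Lemma veqb_refl x : veqb x x = true.
Proof. apply veqb_eq. reflexivity. Qed.

Definition valid (m : nat) (y : vtx) : Prop :=
  match y with
  | Va | Vb => True
  | Vv i | Vs i => (1 <= i <= m)%nat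
  | Vr i j => (1 <= i <= m)%nat /\ (1 <= j <= 2 * m + 1)%nat
  end.

Lemma in_verts m y : In y (verts m) <-> valid m y.
Proof.
  unfold verts. simpl. rewrite !in_app_iff, !in_map_iff, in_flat_map.
  setoid_rewrite in_map_iff. setoid_rewrite in_seq.
  destruct y; simpl; split; intro H; try tauto;
    repeat match goal with
    | H : _ \/ _ |- _ => destruct H
    | H : exists _, _ |- _ => destruct H
    | H : _ /\ _ |- _ => destruct H
    end; try discriminate;
    repeat match goal with H : _ = _ |- _ => injection H; clear H; intros end;
    subst; try lia.
  - do 2 right; left. exists i. split; [reflexivity|lia].
  - do 3 right; left. exists i. split; [reflexivity|lia].
  - do 4 right. exists i. split; [lia|]. exists j. split; [reflexivity|lia].
Qed.

Lemma verts_NoDup m : NoDup (verts m).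
Proof.
  assert (Hseq : forall F : nat -> vtx, (forall i j, F i = F j -> i = j) ->
                 forall k n, NoDup (map F (seq k n))).
  { intros F HF k n. apply FinFun.Injective_map_NoDup; [exact HF|apply seq_NoDup]. }
  unfold verts.
  repeat (apply NoDup_cons || apply NoDup_app);
    try (apply Hseq; congruence);
    try (apply NoDup_flat_map; [apply seq_NoDup|intro; apply Hseq; congruence|]);
    repeat intro;
    repeat match goal with
    | H : In _ (_ :: _) |- _ => destruct H
    | H : In _ (_ ++ _) |- _ => apply in_app_iff in H
    | H : In _ (map _ _) |- _ => apply in_map_iff in H
    | H : In _ (flat_map _ _) |- _ => apply in_flat_map in H
    | H : _ \/ _ |- _ => destruct H
    | H : exists _, _ |- _ => destruct H
    | H : _ /\ _ |- _ => destruct H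
    end; subst; congruence.
Qed.

Lemma in_path_edges_map (F : nat -> vtx) k n u w :
  In (u, w) (path_edges (map F (seq k n))) <->
  exists t, (k <= t /\ S t < k + n)%nat /\ u = F t /\ w = F (S t).
Proof.
  revert k. induction n as [|[|n] IH]; intro k.
  - simpl. split; [tauto|]. intros [t [Ht _]]; lia.
  - simpl. split; [tauto|]. intros [t [Ht _]]; lia.
  - change (In (u, w) ((F k, F (S k)) :: path_edges (map F (seq (S k) (S n)))) <->
            exists t, (k <= t /\ S t < k + S (S n))%nat /\ u = F t /\ w = F (S t)).
    cbn [In]. rewrite IH. split.
    + intros [[= <- <-]|[t [Ht Huw]]]; [exists k|exists t]; split; auto; lia.
    + intros [t [Ht [-> ->]]]. destruct (Nat.eq_dec t k) as [->|Htk]; [now left|].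
      right. exists t. split; [lia|auto].
Qed.

Definition vpath (m t : nat) : vtx :=
  if Nat.eqb t 0 then Va else if Nat.leb t m then Vv t else Vb.
Definition spath (t : nat) : vtx := if Nat.eqb t 0 then Va else Vs t.
Definition rpath (m i t : nat) : vtx :=
  if Nat.eqb t 0 then Vs i else if Nat.leb t (2 * m + 1) then Vr i t else Vv i.

Ltac case_nat := repeat match goal with
  | |- context [Nat.eqb ?a ?b] => destruct (Nat.eqb_spec a b)
  | |- context [Nat.leb ?a ?b] => destruct (Nat.leb_spec a b)
  end.

Ltac vtx_hyps := repeat match goal with
  | H : _ /\ _ |- _ => destruct H
  | H : _ \/ _ |- _ => destruct H
  | H : False |- _ => contradiction
  | H : Vv _ = Vv _ |- _ => injection H; clear H; intro
  | H : Vs _ = Vs _ |- _ => injection H; clear H; intro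
  | H : Vr _ _ = Vr _ _ |- _ => injection H; clear H; intros
  | H : _ = _ |- _ => discriminate H
  end.

Ltac vtx_goal := first [ exact I | reflexivity | (f_equal; lia) | lia | (left; vtx_goal)
  | (right; vtx_goal) | (split; vtx_goal) ].

Ltac nodup_vtx := repeat (apply NoDup_cons; [simpl; intro; vtx_hyps; lia|]); constructor.

Ltac at_pos t :=
  exists t; repeat split; unfold vpath, spath, rpath; case_nat;
  try lia; repeat split; try (f_equal; lia); lia.

Lemma pathV_map m : pathV m = map (vpath m) (seq 0 (m + 2)).
Proof.
  unfold pathV. replace (m + 2)%nat with (S (m + 1)) by lia.
  rewrite Nat.add_1_r, <- cons_seq, seq_S, !map_cons, map_app. f_equal.
  f_equal; [apply map_ext_in; intros a Ha; apply in_seq in Ha|cbn [map]; f_equal];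
    unfold vpath; case_nat; auto; lia.
Qed.

Lemma pathS_map m : pathS m = map spath (seq 0 (m + 1)).
Proof.
  unfold pathS. rewrite Nat.add_1_r, <- cons_seq, map_cons. f_equal.
  apply map_ext_in. intros a Ha. apply in_seq in Ha. unfold spath. case_nat; auto; lia.
Qed.

Lemma pathR_map m i : pathR m i = map (rpath m i) (seq 0 (2 * m + 3)).
Proof.
  unfold pathR. replace (2 * m + 3)%nat with (S (S (2 * m + 1))) by lia.
  rewrite <- cons_seq, seq_S, !map_cons, map_app. f_equal.
  f_equal; [apply map_ext_in; intros a Ha; apply in_seq in Ha|cbn [map]; f_equal];
    unfold rpath; case_nat; auto; lia.
Qed.

Definition path_edge (m : nat) (u w : vtx) : Prop :=
  (exists t, (t < m + 1)%nat /\ u = vpath m t /\ w = vpath m (S t)) \/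
  (exists t, (t < m)%nat /\ u = spath t /\ w = spath (S t)) \/
  (exists i t, (1 <= i <= m)%nat /\ (t < 2 * m + 2)%nat /\
               u = rpath m i t /\ w = rpath m i (S t)).

Lemma in_edges m u w : In (u, w) (edges m) <-> path_edge m u w.
Proof.
  unfold edges, path_edge.
  rewrite !in_app_iff, in_flat_map, pathV_map, pathS_map, !in_path_edges_map.
  setoid_rewrite in_seq. setoid_rewrite pathR_map. setoid_rewrite in_path_edges_map.
  split.
  - intros [[t [Ht H]]|[[t [Ht H]]|[i [Hi [t [Ht H]]]]]].
    + left. exists t. split; [lia|auto].
    + right; left. exists t. split; [lia|auto].
    + right; right. exists i, t. split; [lia|]. split; [lia|auto].
  - intros [[t [Ht H]]|[[t [Ht H]]|[i [t [Hi [Ht H]]]]]].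
    + left. exists t. split; [lia|auto].
    + right; left. exists t. split; [lia|auto].
    + right; right. exists i. split; [lia|]. exists t. split; [lia|auto].
Qed.

Definition adj (m : nat) (x y : vtx) : Prop :=
  match x, y with
  | Va, Vv i | Vv i, Va | Va, Vs i | Vs i, Va => i = 1%nat /\ (1 <= m)%nat
  | Vv i, Vb | Vb, Vv i => i = m /\ (1 <= m)%nat
  | Vv i, Vv j | Vs i, Vs j => (1 <= i <= m /\ 1 <= j <= m /\ (j = S i \/ i = S j))%nat
  | Vs i, Vr k j | Vr k j, Vs i => k = i /\ (1 <= i <= m)%nat /\ j = 1%nat
  | Vr k j, Vv i | Vv i, Vr k j => k = i /\ (1 <= i <= m)%nat /\ j = (2 * m + 1)%nat
  | Vr i j, Vr i' j' =>
      i = i' /\ (1 <= i <= m /\ 1 <= j <= 2 * m + 1 /\ 1 <= j' <= 2 * m + 1 /\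
                 (j' = S j \/ j = S j'))%nat
  | _, _ => False
  end.

Lemma adj_sym m x y : adj m x y -> adj m y x.
Proof. destruct x, y; simpl; intuition lia. Qed.

Lemma adj_valid m x y : adj m x y -> valid m y.
Proof. destruct x, y; simpl; lia. Qed.

Lemma path_edge_adj m u w : (1 <= m)%nat -> path_edge m u w -> adj m u w.
Proof.
  intros Hm [[t [Ht [-> ->]]]|[[t [Ht [-> ->]]]|[i [t [Hi [Ht [-> ->]]]]]]];
    unfold vpath, spath, rpath; case_nat; simpl; lia.
Qed.

Lemma adj_path_edge m x y : adj m x y -> path_edge m x y \/ path_edge m y x.
Proof.
  unfold path_edge.
  destruct x as [| |i|i|i j], y as [| |i'|i'|i' j']; simpl; intro H;
    try contradiction.
  - left; left. at_pos 0%nat.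
  - left; right; left. at_pos 0%nat.
  - right; left. at_pos m.
  - right; left. at_pos 0%nat.
  - left; left. at_pos m.
  - destruct H as [? [? [?|?]]]; [left; left; at_pos i|right; left; at_pos i'].
  - right; right; right. exists i'. at_pos (2 * m + 1)%nat.
  - right; right; left. at_pos 0%nat.
  - destruct H as [? [? [?|?]]]; [left; right; left; at_pos i|right; right; left; at_pos i'].
  - left; right; right. exists i'. at_pos 0%nat.
  - left; right; right. exists i. at_pos (2 * m + 1)%nat.
  - right; right; right. exists i. at_pos 0%nat.
  - destruct H as [<- [? [? [? [?|?]]]]];
      [left; right; right; exists i; at_pos j|right; right; right; exists i; at_pos j'].
Qed.

Lemma adjb_adj m x y : (1 <= m)%nat -> adjb m x y = true <-> adj m x y.
Proof.
  intro Hm. unfold adjb. rewrite existsb_exists. split.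
  - intros [[u w] [He Huw]]. apply in_edges in He. simpl in Huw.
    apply orb_true_iff in Huw as [Huw|Huw]; apply andb_true_iff in Huw as [Hu Hw];
      apply veqb_eq in Hu, Hw; subst.
    + apply path_edge_adj; auto.
    + apply adj_sym, path_edge_adj; auto.
  - intro H. destruct (adj_path_edge m x y H) as [He|He].
    + exists (x, y). split; [apply in_edges; auto|].
      simpl. rewrite !veqb_refl. reflexivity.
    + exists (y, x). split; [apply in_edges; auto|].
      simpl. rewrite !veqb_refl. apply orb_true_r.
Qed.

Section Geodesics.

Variable m : nat.

(* The distance to [b] off the detours, and a lower bound on them. *)
Definition dist_b (x : vtx) : nat :=
  match x with
  | Va => m + 1 | Vb => 0 | Vv i => m + 1 - i | Vs i => m + 1 + i
  | Vr i j => Nat.min (m + 1 + i + j) (3 * m + 3 - i - j)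
  end%nat.

Lemma dist_b_adj x y : adj m x y -> (dist_b x <= dist_b y + 1)%nat.
Proof. destruct x, y; simpl; lia. Qed.

Hypothesis Hm : (1 <= m)%nat.

Lemma walk_dist_b x k : walk m x Vb k -> (dist_b x <= k)%nat.
Proof.
  remember Vb as z eqn:Hz. induction 1 as [|x y z k Hxy _ IH]; subst; [simpl; lia|].
  apply adjb_adj, dist_b_adj in Hxy; auto. specialize (IH eq_refl). lia.
Qed.

Lemma walk_vpath t : (t <= m)%nat -> walk m (vpath m t) Vb (m + 1 - t).
Proof.
  remember (m - t)%nat as d eqn:Hd. revert t Hd.
  induction d as [|d IH]; intros t Hd Ht;
    replace (m + 1 - t)%nat with (S (m - t)) by lia;
    apply walkS with (vpath m (S t)).
  - apply adjb_adj; auto. unfold vpath. case_nat; simpl; lia.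
  - replace (vpath m (S t)) with Vb by (unfold vpath; case_nat; auto; lia).
    replace (m - t)%nat with 0%nat by lia. constructor.
  - apply adjb_adj; auto. unfold vpath. case_nat; simpl; lia.
  - replace (m - t)%nat with (m + 1 - S t)%nat by lia. apply IH; lia.
Qed.

Lemma walk_spath t : (t <= m)%nat -> walk m (spath t) Vb (m + 1 + t).
Proof.
  induction t as [|t IH]; intro Ht.
  - replace (m + 1 + 0)%nat with (m + 1 - 0)%nat by lia. apply (walk_vpath 0); lia.
  - replace (m + 1 + S t)%nat with (S (m + 1 + t)) by lia.
    apply walkS with (spath t); [|apply IH; lia].
    apply adjb_adj; auto. unfold spath. case_nat; simpl; lia.
Qed.

Lemma geodesic_step_dist_b x y k :
  geodesic_step m x y -> walk m x Vb k -> adj m x y /\ (dist_b y < k)%nat.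
Proof.
  intros [Hxy Hshort] Hw. split; [apply adjb_adj; auto|].
  destruct (Hshort k Hw) as [k' [Hw' Hk']]. apply walk_dist_b in Hw'. lia.
Qed.

Lemma geodesic_step_a y : geodesic_step m Va y -> y = Vv 1.
Proof.
  intro Hg. destruct (geodesic_step_dist_b _ _ _ Hg (walk_vpath 0 (Nat.le_0_l m)))
    as [Hadj Hd].
  destruct y; simpl in Hadj, Hd; intuition (subst; auto; lia).
Qed.

Lemma geodesic_step_s i y :
  (1 <= i <= m)%nat -> geodesic_step m (Vs i) y -> y = spath (i - 1).
Proof.
  intros Hi Hg.
  assert (Hw : walk m (Vs i) Vb (m + 1 + i)).
  { replace (Vs i) with (spath i) by (unfold spath; case_nat; auto; lia).
    apply walk_spath; lia. }
  destruct (geodesic_step_dist_b _ _ _ Hg Hw) as [Hadj Hd].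
  unfold spath. case_nat; destruct y; simpl in Hadj, Hd; intuition (subst; auto; try lia).
  all: f_equal; lia.
Qed.

End Geodesics.

(** * The transition operator of the walk on [H_m] *)

Section WalkOnHm.

Variables (m : nat) (nxt : vtx -> vtx).
Hypothesis Hm : (1 <= m)%nat.
Hypothesis Hnxt : forall x, In x (verts m) -> x <> Vb -> geodesic_step m x (nxt x).

Local Notation P := (step (verts m) (trans m nxt)).

Lemma trans_ge0 x y : 0 <= trans m nxt x y.
Proof.
  unfold trans. destruct (excited x); [destruct (veqb (nxt x) y); lra|].
  destruct (adjb m x y); [|lra].
  destruct (length (nbrs m x)) as [|k]; [simpl; rewrite Rinv_0; lra|].
  apply Rlt_le, Rinv_0_lt_compat, lt_0_INR, Nat.lt_0_succ.
Qed.

Lemma step_unexcited f x s :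
  excited x = false -> NoDup s -> (forall y, In y (verts m) /\ adj m x y <-> In y s) ->
  P f x = sumR (map f s) / INR (length s).
Proof.
  intros Hx Hs Hadj. unfold step, trans. rewrite Hx.
  assert (Hsel : forall y, In y (verts m) /\ adjb m x y = true <-> In y s).
  { intro y. rewrite adjb_adj; auto. }
  destruct (sumR_select (adjb m x) (fun y => / INR (length s) * f y) (verts m) s
              (verts_NoDup m) Hs Hsel) as [Hsum Hlen].
  unfold nbrs. rewrite Hlen.
  rewrite (sumR_ext _ (fun y => if adjb m x y then / INR (length s) * f y else 0))
    by (intros y _; destruct (adjb m x y); ring).
  rewrite Hsum, sumR_scal_l. unfold Rdiv. ring.
Qed.

Lemma step_excited f x :
  excited x = true -> In x (verts m) -> x <> Vb -> P f x = f (nxt x).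
Proof.
  intros Hx Hin Hb. unfold step, trans. rewrite Hx.
  assert (Hnx : In (nxt x) (verts m)).
  { destruct (Hnxt x Hin Hb) as [Hadj _]. apply adjb_adj in Hadj; auto.
    apply in_verts. eapply adj_valid; eauto. }
  assert (Hsel : forall y, In y (verts m) /\ veqb (nxt x) y = true <-> In y [nxt x]).
  { intro y. rewrite veqb_eq. simpl. split; [intros [_ ->]; auto|intros [<-|[]]; auto]. }
  rewrite (sumR_ext _ (fun y => if veqb (nxt x) y then f y else 0))
    by (intros y _; destruct (veqb (nxt x) y); ring).
  rewrite (proj1 (sumR_select _ f _ [nxt x] (verts_NoDup m)
                    (NoDup_cons _ (@in_nil _ _) (NoDup_nil _)) Hsel)).
  simpl. ring.
Qed.

Lemma step_a f : P f Va = f (vpath m 1).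
Proof.
  rewrite step_excited; [|reflexivity|apply in_verts; exact I|discriminate].
  rewrite (geodesic_step_a m Hm (nxt Va));
    [|apply Hnxt; [apply in_verts; exact I|discriminate]].
  unfold vpath. case_nat; auto; lia.
Qed.

Lemma step_s f i : (1 <= i <= m)%nat -> P f (Vs i) = f (spath (i - 1)).
Proof.
  intro Hi. assert (Hin : In (Vs i) (verts m)) by (apply in_verts; exact Hi).
  rewrite step_excited by (auto || discriminate).
  rewrite (geodesic_step_s m Hm i (nxt (Vs i)) Hi); [reflexivity|].
  apply Hnxt; [exact Hin|discriminate].
Qed.

Lemma step_v f i : (1 <= i <= m)%nat ->
  P f (Vv i) = (f (vpath m (i - 1)) + f (vpath m (S i)) + f (Vr i (2 * m + 1))) / 3.
Proof.
  intro Hi.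
  rewrite (step_unexcited f _ [vpath m (i - 1); vpath m (S i); Vr i (2 * m + 1)]);
    [unfold sumR; simpl; lra|reflexivity| |].
  - unfold vpath. case_nat; nodup_vtx.
  - intro y. rewrite in_verts. unfold vpath. case_nat;
      destruct y; simpl; split; intro Hy; vtx_hyps; subst; try vtx_goal.
Qed.

Lemma step_r f i j : (1 <= i <= m)%nat -> (1 <= j <= 2 * m + 1)%nat ->
  P f (Vr i j) = (f (rpath m i (j - 1)) + f (rpath m i (S j))) / 2.
Proof.
  intros Hi Hj.
  rewrite (step_unexcited f _ [rpath m i (j - 1); rpath m i (S j)]);
    [unfold sumR; simpl; lra|reflexivity| |].
  - unfold rpath. case_nat; nodup_vtx.
  - intro y. rewrite in_verts. unfold rpath. case_nat;
      destruct y; simpl; split; intro Hy; vtx_hyps; subst; try vtx_goal.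
Qed.

Lemma live_cases x : In x (live veqb (verts m) Vb) ->
  x = Va \/ (exists i, x = Vv i /\ (1 <= i <= m)%nat) \/
  (exists i, x = Vs i /\ (1 <= i <= m)%nat) \/
  (exists i j, x = Vr i j /\ (1 <= i <= m)%nat /\ (1 <= j <= 2 * m + 1)%nat).
Proof.
  intro Hx. apply (in_live _ _ veqb_eq) in Hx as [Hx Hb]. apply in_verts in Hx.
  destruct x; simpl in Hx; [left; reflexivity|contradiction| | |]; eauto 10.
Qed.

Lemma step_one x : In x (live veqb (verts m) Vb) -> P (fun _ => 1) x = 1.
Proof.
  intro Hx.
  destruct (live_cases x Hx) as [->|[[i [-> Hi]]|[[i [-> Hi]]|[i [j [-> [Hi Hj]]]]]]].
  - apply step_a.
  - rewrite step_v by exact Hi. lra.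
  - apply step_s, Hi.
  - rewrite step_r by assumption. lra.
Qed.

End WalkOnHm.

(** * The two potentials *)

Definition detour (m : nat) : R := 2 * INR m + 2.

Lemma INR_detour m : INR (2 * m + 2) = detour m.
Proof. unfold detour. rewrite plus_INR, mult_INR. simpl. ring. Qed.

Lemma INR_detour_pred m : INR (2 * m + 1) = detour m - 1.
Proof. unfold detour. rewrite plus_INR, mult_INR. simpl. ring. Qed.

Lemma detour_pos m : 0 < detour m.
Proof. unfold detour. pose proof (pos_INR m). lra. Qed.

Lemma detour_ge4 m : (1 <= m)%nat -> 4 <= detour m.
Proof. intro Hm. apply le_INR in Hm. unfold detour. simpl in Hm. lra. Qed.

Section UpperPotential.

Variable m : nat.

Local Notation L := (detour m).

Definition upper_v (t : nat) : R := L * (L + 2) * (2 ^ S m - 2 ^ t).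
Definition upper_s (t : nat) : R := upper_v 0 + INR t.
Definition upper_r (i : nat) (t : R) : R :=
  (1 - t / L) * upper_s i + t / L * upper_v i + t * (L - t).

Definition upper_pot (x : vtx) : R :=
  match x with
  | Va => upper_v 0 | Vb => 0 | Vv i => upper_v i | Vs i => upper_s i
  | Vr i j => upper_r i (INR j)
  end.

Lemma upper_pot_vpath t : (t <= S m)%nat -> upper_pot (vpath m t) = upper_v t.
Proof.
  intro Ht. unfold vpath. case_nat; subst; simpl; try reflexivity.
  replace t with (S m) by lia. unfold upper_v. ring.
Qed.

Lemma upper_pot_spath t : upper_pot (spath t) = upper_s t.
Proof. unfold spath. case_nat; subst; simpl; [unfold upper_s; simpl; ring|reflexivity]. Qed.

Lemma upper_pot_rpath i t :
  (t <= 2 * m + 2)%nat -> upper_pot (rpath m i t) = upper_r i (INR t).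
Proof.
  pose proof (detour_pos m). intro Ht. unfold rpath. case_nat; subst; simpl.
  - unfold upper_r. simpl. field. lra.
  - reflexivity.
  - replace t with (2 * m + 2)%nat by lia. rewrite INR_detour. unfold upper_r. field. lra.
Qed.

Definition upper_max : R := upper_v 0 + INR m + L * L.

Lemma upper_v_bounds t : (t <= S m)%nat -> 0 <= upper_v t <= upper_v 0.
Proof.
  intro Ht. pose proof (detour_pos m). unfold upper_v.
  assert (1 <= 2 ^ t) by (rewrite <- (pow1 t); apply pow_incr; lra).
  pose proof (Rle_pow 2 t (S m) ltac:(lra) Ht).
  rewrite pow_O. split; [apply Rmult_le_pos|apply Rmult_le_compat_l]; nra.
Qed.

Lemma upper_pot_bounds x : In x (verts m) -> 0 <= upper_pot x <= upper_max.
Proof.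
  intro Hx. apply in_verts in Hx. pose proof (detour_pos m) as HL.
  pose proof (upper_v_bounds 0 (Nat.le_0_l _)) as H0. pose proof (pos_INR m).
  unfold upper_max. destruct x; simpl in Hx; cbn [upper_pot].
  - nra.
  - nra.
  - pose proof (upper_v_bounds i ltac:(lia)). nra.
  - assert (INR i <= INR m) by (apply le_INR; lia). pose proof (pos_INR i).
    unfold upper_s. nra.
  - destruct Hx as [Hi Hj].
    pose proof (upper_v_bounds i ltac:(lia)).
    assert (INR i <= INR m) by (apply le_INR; lia). pose proof (pos_INR i).
    assert (Hjl : 0 <= INR j <= L).
    { split; [apply pos_INR|].
      assert (INR j <= INR (2 * m + 1)) by (apply le_INR; lia).
      rewrite INR_detour_pred in *. lra. }
    set (a := INR j / L).
    assert (Ha : 0 <= a <= 1).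
    { unfold a. split.
      - unfold Rdiv. apply Rmult_le_pos; [lra|apply Rlt_le, Rinv_0_lt_compat; lra].
      - apply Rmult_le_reg_l with L; [lra|]. field_simplify; lra. }
    assert (0 <= INR j * (L - INR j) <= L * L) by nra.
    unfold upper_r, upper_s. fold a. split; nra.
Qed.

Hypothesis Hm : (1 <= m)%nat.

Lemma upper_pot_drift nxt x :
  (forall x, In x (verts m) -> x <> Vb -> geodesic_step m x (nxt x)) ->
  In x (live veqb (verts m) Vb) ->
  step (verts m) (trans m nxt) upper_pot x <= upper_pot x - 1.
Proof.
  intros Hnxt Hx. pose proof (detour_ge4 m Hm) as HL.
  destruct (live_cases m x Hx) as [->|[[i [-> Hi]]|[[i [-> Hi]]|[i [j [-> [Hi Hj]]]]]]].
  - rewrite step_a, upper_pot_vpath by (auto; lia). simpl. unfold upper_v. simpl. nra.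
  - rewrite step_v, !upper_pot_vpath by (auto; lia). cbn [upper_pot].
    rewrite INR_detour_pred.
    destruct i as [|k]; [lia|]. replace (S k - 1)%nat with k by lia.
    assert (Hk : INR (S k) <= L)
      by (assert (INR (S k) <= INR m) by (apply le_INR; lia);
          pose proof (pos_INR m); unfold detour; lra).
    assert (Hpow : 1 <= 2 ^ k) by (rewrite <- (pow1 k); apply pow_incr; lra).
    assert (Hi_L : INR (S k) / L <= 1)
      by (apply Rmult_le_reg_l with L; [lra|]; field_simplify; lra).
    (* the weight [L (L + 2)] of [upper_v] makes the constant terms cancel *)
    assert (Hgap : 3 * (upper_v (S k) - 1)
              - (upper_v k + upper_v (S (S k)) + upper_r (S k) (L - 1))
            = (L * L - 4) * 2 ^ k - INR (S k) / L).
    { unfold upper_r, upper_s, upper_v. simpl pow. field. lra. }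
    assert (12 <= L * L - 4) by nra.
    assert (12 <= (L * L - 4) * 2 ^ k) by nra.
    lra.
  - rewrite step_s, upper_pot_spath by assumption. simpl. unfold upper_s.
    rewrite minus_INR by lia. simpl. lra.
  - rewrite step_r, !upper_pot_rpath by (auto; lia). cbn [upper_pot].
    rewrite minus_INR, (S_INR j) by lia. change (INR 1) with 1. unfold upper_r.
    apply Req_le. field. lra.
Qed.

End UpperPotential.

Section LowerPotential.

Variable m : nat.

Local Notation L := (detour m).

Definition growth : R := 1 + / (2 * sqrt (INR m + 1)).

(* [prof t = 2 (cosh (t log growth) - 1)]: it satisfies the linear recurrence
   [prof_rec], which makes the profile [height] below almost harmonic. *)
Definition prof (t : nat) : R := growth ^ t + / growth ^ t - 2.

Definition height (x : vtx) : R :=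
  match x with
  | Va | Vs _ => 0 | Vb => prof (S m) | Vv i => prof i
  | Vr i j => prof i * INR j / L
  end.

Definition lower_pot (x : vtx) : R := (prof (S m) - height x) / prof 1.

Lemma sqrt_m1_ge1 : 1 <= sqrt (INR m + 1).
Proof. rewrite <- sqrt_1 at 1. apply sqrt_le_1_alt. pose proof (pos_INR m). lra. Qed.

Lemma growth_gt1 : 1 < growth.
Proof.
  pose proof sqrt_m1_ge1. unfold growth.
  assert (0 < / (2 * sqrt (INR m + 1))) by (apply Rinv_0_lt_compat; lra). lra.
Qed.

Lemma prof_sq t : prof t = (growth ^ t - 1) ^ 2 / growth ^ t.
Proof.
  pose proof growth_gt1. assert (0 < growth ^ t) by (apply pow_lt; lra).
  unfold prof. field. lra.
Qed.

Lemma prof_ge0 t : 0 <= prof t.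
Proof.
  rewrite prof_sq. pose proof growth_gt1. assert (0 < growth ^ t) by (apply pow_lt; lra).
  apply Rmult_le_pos; [apply pow2_ge_0|apply Rlt_le, Rinv_0_lt_compat; lra].
Qed.

Lemma prof_pos t : (1 <= t)%nat -> 0 < prof t.
Proof.
  intro Ht. rewrite prof_sq. pose proof growth_gt1.
  assert (1 < growth ^ t).
  { destruct t as [|t]; [lia|]. simpl. pose proof (pow_R1_Rle growth t). nra. }
  apply Rdiv_lt_0_compat; [apply pow_lt|]; lra.
Qed.

Lemma prof_rec k : prof (S (S k)) + prof k = (2 + prof 1) * prof (S k) + 2 * prof 1.
Proof.
  pose proof growth_gt1. assert (0 < growth ^ k) by (apply pow_lt; lra).
  unfold prof. simpl. field. lra.
Qed.

Lemma prof1_le : prof 1 <= / (4 * (INR m + 1)).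
Proof.
  pose proof sqrt_m1_ge1. pose proof growth_gt1.
  assert (Hsq : sqrt (INR m + 1) * sqrt (INR m + 1) = INR m + 1)
    by (apply sqrt_sqrt; pose proof (pos_INR m); lra).
  assert (Hd : (growth - 1) ^ 2 = / (4 * (INR m + 1))).
  { unfold growth. set (q := sqrt (INR m + 1)) in *. rewrite <- Hsq. field. lra. }
  rewrite prof_sq, pow_1, <- Hd.
  unfold Rdiv. rewrite <- (Rmult_1_r ((growth - 1) ^ 2)) at 2.
  apply Rmult_le_compat_l; [apply pow2_ge_0|].
  rewrite <- Rinv_1. apply Rinv_le_contravar; lra.
Qed.

Lemma prof1_le_inv_detour : prof 1 <= / L.
Proof.
  eapply Rle_trans; [apply prof1_le|]. unfold detour. pose proof (pos_INR m).
  apply Rinv_le_contravar; lra.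
Qed.

Lemma height_vpath t : (t <= S m)%nat -> height (vpath m t) = prof t.
Proof.
  intro Ht. unfold vpath. case_nat; subst; simpl; try reflexivity.
  - unfold prof. simpl. field.
  - f_equal. lia.
Qed.

Lemma height_spath t : height (spath t) = 0.
Proof. unfold spath. case_nat; reflexivity. Qed.

Lemma height_rpath i t :
  (t <= 2 * m + 2)%nat -> height (rpath m i t) = prof i * INR t / L.
Proof.
  pose proof (detour_pos m). intro Ht. unfold rpath. case_nat; subst; simpl.
  - unfold Rdiv. ring.
  - reflexivity.
  - replace t with (2 * m + 2)%nat by lia. rewrite INR_detour. field. lra.
Qed.

Hypothesis Hm : (1 <= m)%nat.

Lemma height_drift nxt x :
  (forall x, In x (verts m) -> x <> Vb -> geodesic_step m x (nxt x)) ->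
  In x (live veqb (verts m) Vb) ->
  step (verts m) (trans m nxt) height x <= height x + prof 1.
Proof.
  intros Hnxt Hx. pose proof (detour_ge4 m Hm) as HL.
  pose proof (prof_pos 1 (le_n 1)) as Hc.
  destruct (live_cases m x Hx) as [->|[[i [-> Hi]]|[[i [-> Hi]]|[i [j [-> [Hi Hj]]]]]]].
  - rewrite step_a, height_vpath by (auto; lia). simpl. lra.
  - rewrite step_v, !height_vpath by (auto; lia). cbn [height].
    rewrite INR_detour_pred.
    destruct i as [|k]; [lia|]. replace (S k - 1)%nat with k by lia.
    pose proof (prof_rec k). pose proof (prof_ge0 (S k)). pose proof prof1_le_inv_detour.
    (* the detour lowers the average by [prof (S k) / L >= prof 1 * prof (S k)] *)
    assert (Hdet : prof (S k) * (prof 1 - / L) <= 0) by nra.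
    assert (Heq : prof (S k) * (detour m - 1) / detour m = prof (S k) - prof (S k) * / L)
      by (field; lra).
    rewrite Heq. nra.
  - rewrite step_s, height_spath by assumption. simpl. lra.
  - rewrite step_r, !height_rpath by (auto; lia). cbn [height].
    rewrite minus_INR, (S_INR j) by lia. change (INR 1) with 1.
    match goal with |- ?l <= ?r + _ => assert (l = r) by (field; lra) end. lra.
Qed.

Lemma lower_pot_drift nxt x :
  (forall x, In x (verts m) -> x <> Vb -> geodesic_step m x (nxt x)) ->
  In x (live veqb (verts m) Vb) ->
  lower_pot x - 1 <= step (verts m) (trans m nxt) lower_pot x.
Proof.
  intros Hnxt Hx. pose proof (prof_pos 1 (le_n 1)) as Hc.
  rewrite (step_ext _ _ _ _ (fun y => - / prof 1 * height y + prof (S m) / prof 1))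
    by (intros; unfold lower_pot; field; lra).
  rewrite step_affine, (step_one m nxt Hm Hnxt x Hx).
  pose proof (height_drift nxt x Hnxt Hx). unfold lower_pot.
  apply Rmult_le_reg_l with (prof 1); [exact Hc|]. field_simplify; lra.
Qed.

Lemma lower_pot_b : lower_pot Vb = 0.
Proof. unfold lower_pot. simpl. unfold Rdiv. ring. Qed.

Lemma lower_pot_le x : lower_pot x <= prof (S m) / prof 1.
Proof.
  pose proof (prof_pos 1 (le_n 1)).
  assert (0 <= height x).
  { destruct x; simpl; try lra; try apply prof_ge0.
    pose proof (detour_pos m). pose proof (prof_ge0 i). pose proof (pos_INR j).
    apply Rmult_le_pos; [apply Rmult_le_pos; lra|apply Rlt_le, Rinv_0_lt_compat; lra]. }
  unfold lower_pot, Rdiv. apply Rmult_le_compat_r; [apply Rlt_le, Rinv_0_lt_compat|]; lra.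
Qed.

Lemma lower_pot_v1 : lower_pot (Vv 1) = prof (S m) / prof 1 - 1.
Proof. pose proof (prof_pos 1 (le_n 1)). unfold lower_pot. simpl. field. lra. Qed.

Lemma growth_pow_ge : 1 + sqrt (INR m + 1) / 2 <= growth ^ S m.
Proof.
  pose proof sqrt_m1_ge1.
  assert (Hd : 0 < / (2 * sqrt (INR m + 1))) by (apply Rinv_0_lt_compat; lra).
  pose proof (poly (S m) _ Hd) as Hbern. fold growth in Hbern.
  replace (INR (S m) * / (2 * sqrt (INR m + 1))) with (sqrt (INR m + 1) / 2) in Hbern;
    [exact Hbern|].
  rewrite S_INR. rewrite <- (sqrt_sqrt (INR m + 1)) at 2 by (pose proof (pos_INR m); lra).
  field. lra.
Qed.

Lemma exp_INR_mult n x : exp (INR n * x) = exp x ^ n.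
Proof.
  induction n as [|n IH]; simpl pow; [rewrite Rmult_0_l, exp_0; reflexivity|].
  rewrite S_INR, Rmult_plus_distr_r, Rmult_1_l, exp_plus, IH. ring.
Qed.

Lemma exp_le_growth_pow : exp (sqrt (INR m + 1) / 4) <= growth ^ S m.
Proof.
  pose proof sqrt_m1_ge1 as Hsq.
  set (d := / (2 * sqrt (INR m + 1))).
  assert (Hd : 0 < d <= 1 / 2).
  { unfold d. split; [apply Rinv_0_lt_compat; lra|].
    apply Rmult_le_reg_l with (2 * sqrt (INR m + 1)); [lra|].
    rewrite Rinv_r by lra. lra. }
  (* [exp (d/2) <= 1 + d] follows from [1 - d/2 <= exp (-d/2)] *)
  assert (Hexp : exp (d / 2) <= growth).
  { pose proof (exp_ineq1_le (- (d / 2))) as Hlow.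
    assert (exp (d / 2) * exp (- (d / 2)) = 1)
      by (rewrite <- exp_plus, Rplus_opp_r; apply exp_0).
    pose proof (exp_pos (d / 2)). unfold growth. fold d. nra. }
  replace (sqrt (INR m + 1) / 4) with (INR (S m) * (d / 2)).
  - rewrite exp_INR_mult. apply pow_incr. pose proof (exp_pos (d / 2)). lra.
  - unfold d. rewrite S_INR.
    rewrite <- (sqrt_sqrt (INR m + 1)) at 1 by (pose proof (pos_INR m); lra). field. lra.
Qed.

Lemma prof_ratio_ge : growth ^ S m / 2 <= prof (S m) / prof 1 - 1.
Proof.
  pose proof (prof_pos 1 (le_n 1)) as Hc. pose proof prof1_le as Hc'.
  pose proof growth_pow_ge as Hs. pose proof sqrt_m1_ge1.
  assert (HM : 2 <= INR m + 1) by (apply le_INR in Hm; simpl in Hm; lra).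
  set (s := growth ^ S m) in *. set (u := s - 1).
  assert (Hu : sqrt (INR m + 1) / 2 <= u) by (unfold u; lra).
  assert (Hu2 : 1 / 2 <= u * u).
  { assert (sqrt (INR m + 1) * sqrt (INR m + 1) = INR m + 1)
      by (apply sqrt_sqrt; pose proof (pos_INR m); lra).
    nra. }
  assert (Hu7 : 7 / 10 <= u) by (assert (1 / 2 <= u) by lra; nra).
  assert (Hprof : prof (S m) = u * u / s) by (rewrite prof_sq; fold s; unfold u; field; lra).
  assert (Hratio : 8 * (u * u / s) <= prof (S m) / prof 1).
  { rewrite Hprof. unfold Rdiv. rewrite Rmult_comm.
    apply Rmult_le_compat_l; [apply Rmult_le_pos; [nra|apply Rlt_le, Rinv_0_lt_compat; lra]|].
    apply Rle_trans with (4 * (INR m + 1)); [lra|].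
    rewrite <- (Rinv_inv (4 * (INR m + 1))). apply Rinv_le_contravar; lra. }
  assert (s / 2 + 1 <= 8 * (u * u / s)).
  { apply Rmult_le_reg_l with s; [lra|].
    replace (s * (8 * (u * u / s))) with (8 * (u * u)) by (field; lra).
    replace s with (1 + u) by (unfold u; ring). nra. }
  lra.
Qed.

End LowerPotential.

Lemma hitting_bound_le_prof_ratio m : (1 <= m)%nat ->
  exp (sqrt (INR m) / 10) / (Rpower (INR m) (3 / 2) + 1) <= prof m (S m) / prof m 1 - 1.
Proof.
  intro Hm.
  assert (Hm1 : 1 <= INR m) by (apply le_INR in Hm; exact Hm).
  assert (HP : 1 <= Rpower (INR m) (3 / 2)).
  { rewrite <- (Rpower_O (INR m)) by lra. apply Rle_Rpower; lra. }
  assert (Hexp : exp (sqrt (INR m) / 10) <= growth m ^ S m).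
  { eapply Rle_trans; [|apply exp_le_growth_pow].
    assert (sqrt (INR m) <= sqrt (INR m + 1)) by (apply sqrt_le_1_alt; lra).
    pose proof (sqrt_pos (INR m)). pose proof (sqrt_m1_ge1 m).
    left. apply exp_increasing. lra. }
  pose proof (prof_ratio_ge m Hm). pose proof (exp_pos (sqrt (INR m) / 10)).
  apply Rle_trans with (exp (sqrt (INR m) / 10) / 2); [|lra].
  unfold Rdiv. apply Rmult_le_compat_l; [lra|]. apply Rinv_le_contravar; lra.
Qed.

Lemma killed_eq m nxt n y :
  killed m nxt n y = killed_dist veqb (verts m) Vb (Vv 1) (trans m nxt) n y.
Proof.
  revert y. induction n as [|n IH]; intro y; [reflexivity|].
  cbn [killed killed_dist]. f_equal. apply map_ext. intro x. rewrite IH. reflexivity.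
Qed.

Lemma hit_partial_mean m nxt N :
  hit_partial m nxt N = mean_hit_partial veqb (verts m) Vb (Vv 1) (trans m nxt) N.
Proof. apply sum_eq. intros n _. unfold hit_prob. rewrite killed_eq. reflexivity. Qed.

Theorem mainTheorem4 (m : nat) (Hm : (1 <= m)%nat) (nxt : vtx -> vtx)
  (Hnxt : forall x, In x (verts m) -> x <> Vb -> geodesic_step m x (nxt x)) :
  hitting_time_ge m nxt
    (exp (sqrt (INR m) / 10) / (Rpower (INR m) (3 / 2) + 1)).
Proof.
  intros c Hc. setoid_rewrite hit_partial_mean.
  assert (Hv1 : In (Vv 1) (verts m)) by (apply in_verts; simpl; lia).
  apply (mean_hit_partial_lyapunov vtx veqb veqb_eq (verts m) Vb (Vv 1) (trans m nxt)
           (verts_NoDup m) (proj2 (in_verts m Vb) I) (trans_ge0 m nxt) Hv1 ltac:(discriminate)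
           (step_one m nxt Hm Hnxt)
           (lower_pot m) (prof m (S m) / prof m 1) (upper_pot m) (upper_max m)).
  - apply lower_pot_b.
  - intros x Hx. apply lower_pot_drift; assumption.
  - intros x _. apply lower_pot_le.
  - reflexivity.
  - apply upper_pot_bounds.
  - intros x Hx. apply upper_pot_drift; assumption.
  - rewrite lower_pot_v1. pose proof (hitting_bound_le_prof_ratio m Hm). lra.
Qed.
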